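(* Let $C \subset \mathbb{R}^n$ be convex and closed with nonempty interior, and let $h\colon C\to\mathbb{R}$ be Legendre on $C$, continuous on $C$, and satisfy condition (B): for every sequence $(x_k)_{k\in\mathbb{N}} \subset \mathrm{int}\, C$ and every $y \in C$, if $x_k \to y$ then $D_h(y,x_k) \to 0$. Then the set of extreme points of $C$ is locally finite (every bounded subset of $\mathbb{R}^n$ contains only finitely many extreme points of $C$). In particular, if $C$ is bounded, then $C$ is a polytope.
   Context: A convex function $h \colon C \to \mathbb{R}$ on a convex set $C\subset\mathbb{R}^n$ with nonempty interior is called Legendre if (1) $h$ is continuously differentiable on $\mathrm{int}\, C$ and $\|\nabla h(x)\| \to +\infty$ whenever $x \in \mathrm{int}\, C$ approaches a point of the boundary of $C$; and (2) $h$ is strictly convex on $\mathrm{int}\, C$. The Bregman divergence is $D_h(y,x) = h(y) - h(x) - \langle \nabla h(x), y - x\rangle$ for $y \in C$, $x \in \mathrm{int}\, C$. A polytope is the convex hull of finitely many points. *)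

From HB Require Import structures.
From mathcomp Require Import all_boot all_order all_algebra.
From mathcomp Require Import all_classical all_reals all_analysis.
Set Implicit Arguments. Unset Strict Implicit. Unset Printing Implicit Defensive.
Import Order.TTheory GRing.Theory Num.Theory.
Import numFieldNormedType.Exports.
Local Open Scope classical_set_scope.
Local Open Scope ring_scope.

Section Defs.
Variables (R : realType) (n : nat).
Notation V := 'rV[R]_n.

Definition convex_set_rV (C : set V) : Prop :=
  forall x y (t : R), C x -> C y -> 0 <= t <= 1 -> C (t *: x + (1 - t) *: y).

Definition inner (u v : V) : R := \sum_(i < n) u ord0 i * v ord0 i.

Definition grad (h : V -> R) (x : V) : V :=
  \row_(i < n) ('d h x (delta_mx ord0 i : V) : R).

Definition bregman (h : V -> R) (y x : V) : R :=
  h y - h x - inner (grad h x) (y - x).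

Definition convex_on (C : set V) (h : V -> R) : Prop :=
  forall x y (t : R), C x -> C y -> 0 <= t <= 1 ->
    h (t *: x + (1 - t) *: y) <= t * h x + (1 - t) * h y.

Definition strictly_convex_on (D : set V) (h : V -> R) : Prop :=
  forall x y (t : R), D x -> D y -> x != y -> 0 < t < 1 ->
    h (t *: x + (1 - t) *: y) < t * h x + (1 - t) * h y.

(* Legendre function on C (h is only relevant on C) *)
Definition legendre (C : set V) (h : V -> R) : Prop :=
  convex_on C h /\
  (forall x, interior C x -> differentiable h x) /\
  {within interior C, continuous (grad h)} /\
  (forall y, (closure C `\` interior C) y ->
     forall M : R, exists2 e : R, 0 < e &
       forall x, interior C x -> `|x - y| < e -> M < `|grad h x|) /\
  strictly_convex_on (interior C) h.

Definition condB (C : set V) (h : V -> R) : Prop :=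
  forall (x_ : nat -> V) (y : V),
    (forall k, interior C (x_ k)) -> C y ->
    x_ @ \oo --> y -> (fun k => bregman h y (x_ k)) @ \oo --> 0.

Definition extreme_point (C : set V) (x : V) : Prop :=
  C x /\ forall y z (t : R), C y -> C z -> 0 < t < 1 ->
    x = t *: y + (1 - t) *: z -> y = x /\ z = x.

Definition conv_hull (k : nat) (p : 'I_k -> V) : set V :=
  \bigcap_(D in [set D | convex_set_rV D /\ forall i, D (p i)]) D.

Definition polytope (C : set V) : Prop :=
  exists k (p : 'I_k -> V), C = conv_hull p.

End Defs.

From HB Require Import structures.
From mathcomp Require Import all_boot all_order all_algebra.
From mathcomp Require Import all_classical all_reals all_analysis.
From mathcomp Require Import ring lra.
Set Implicit Arguments. Unset Strict Implicit. Unset Printing Implicit Defensive.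
Import Order.TTheory GRing.Theory Num.Theory.
Import numFieldNormedType.Exports.
Local Open Scope classical_set_scope.
Local Open Scope ring_scope.

(* Extreme points of C are isolated. Fix y in C; by (B), D_h(y, x) < 1 for
   interior x near y. Let q be a boundary point near y such that the segment
   [y, q] meets int C at some m. For interior x close to q, the identity
   D_h(m, x) = (1 - t) D_h(y, x) + t D_h(q, x) + const keeps D_h(m, x) bounded,
   and since m is interior, D_h(m +- r e_i, x) >= 0 bounds grad h(x): this
   contradicts the blow-up of grad h at q. Consequently, for p in C close to y
   the reflection 2p - y stays in C, so an extreme point p close to y, being
   the midpoint of y and 2p - y, equals y. Local finiteness then follows by
   compactness of balls, and a bounded C is the convex hull of its (finitely
   many) extreme points by Minkowski's theorem. *)

Lemma cvg_dnbhs_at_right (R : numFieldType) (T : topologicalType) (f : R -> T)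
    (a : R) (l : T) :
  f t @[t --> a^'] --> l -> f t @[t --> a^'+] --> l.
Proof.
move=> fl A /fl /nbhs_ballP[e e0 Ae]; apply/nbhs_ballP; exists e => // t /Ae At a_t.
by apply: At; rewrite gt_eqF.
Qed.

Section ConvexGeometry.
Variables (R : realType) (n : nat).
Local Notation V := 'rV[R]_n.
Implicit Types C : set V.

Lemma interiorP C x :
  interior C x <-> exists2 r : R, 0 < r & forall z, `|z - x| < r -> C z.
Proof.
apply: (iff_trans (nbhs_normP x C)).
by split=> -[r r0 Cr]; exists r => // z zx; apply: Cr; rewrite /= distrC.
Qed.

Lemma row_norm_le (v : V) (b : R) : 0 <= b -> (forall i, `|v 0 i| <= b) -> `|v| <= b.
Proof.
move=> b0 vb; rewrite [leLHS]/Num.Def.normr /= mx_normrE.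
by apply: bigmax_le => // -[i j] _ /=; rewrite (ord1 i).
Qed.

Lemma bounded_norm_le (B : set V) : bounded_set B ->
  exists2 M : R, 0 < M & forall x, B x -> `|x| <= M.
Proof. by move=> /pinfty_ex_gt0[M M0 BM]; exists M. Qed.

Lemma interior_convex_comb C c p (t : R) : convex_set_rV C -> interior C c -> C p ->
  0 < t <= 1 -> interior C (t *: c + (1 - t) *: p).
Proof.
move=> convC /interiorP[r r0 Cc] Cp /andP[t0 t1].
apply/interiorP; exists (t * r) => [|z zc]; first by rewrite mulr_gt0.
have -> : z = t *: (c + t^-1 *: (z - (t *: c + (1 - t) *: p))) + (1 - t) *: p.
  by apply/rowP => i; rewrite !mxE; field; rewrite gt_eqF.
apply: convC => //; last by rewrite (ltW t0) t1.
apply: Cc; rewrite addrC addKr normrZ ger0_norm ?invr_ge0 ?(ltW t0) //.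
by rewrite ltr_pdivrMl.
Qed.

Lemma convex_interior_near C y (e : R) : convex_set_rV C -> interior C !=set0 ->
  C y -> 0 < e -> exists2 c, interior C c & `|c - y| < e.
Proof.
move=> convC [c0 intc0] Cy e0.
have c0y : 0 < `|c0 - y| + 1 by rewrite ltr_pwDr.
pose t := Num.min 1 (e / (`|c0 - y| + 1)).
have t0 : 0 < t by rewrite lt_min ltr01 divr_gt0.
exists (t *: c0 + (1 - t) *: y).
  by apply: interior_convex_comb; rewrite ?t0 ?ge_min ?lexx.
have -> : t *: c0 + (1 - t) *: y - y = t *: (c0 - y).
  by apply/rowP => i; rewrite !mxE; ring.
rewrite normrZ ger0_norm ?(ltW t0) //.
have : t <= e / (`|c0 - y| + 1) by rewrite ge_min lexx orbT.
rewrite ler_pdivlMr //; nra.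
Qed.

Lemma segment_exit_point C (a d : V) : closed C -> C a -> ~ C (a + d) ->
  exists tau : R, [/\ 0 <= tau < 1, C (a + tau *: d), ~ interior C (a + tau *: d) &
    forall t, tau < t <= 1 -> ~ C (a + t *: d)].
Proof.
move=> clC Ca Cad.
pose S := [set t : R | 0 <= t <= 1 /\ C (a + t *: d)].
have S0 : S 0 by rewrite /S /= lexx ler01 scale0r addr0.
have supS : has_sup S by split; [exists 0 | exists 1 => t [/andP[_ ->]]].
pose tau := sup S.
have tau0 : 0 <= tau := sup_upper_bound supS S0.
have tau1 : tau <= 1 by apply: ge_sup; [exists 0 | move=> t [/andP[_ ->]]].
have le_tau t : 0 <= t <= 1 -> C (a + t *: d) -> t <= tau.
  by move=> t01 Ct; apply: sup_upper_bound.
have small_step (r s : R) : 0 < r -> 0 <= s <= r / (`|d| + 1) -> `|s *: d| < r.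
  move=> r0 /andP[s0 sr]; rewrite normrZ ger0_norm //.
  have d1 : 0 < `|d| + 1 by rewrite ltr_pwDr.
  rewrite ler_pdivlMr // in sr; nra.
have Ctau : C (a + tau *: d).
  rewrite (closure_id C).1 // => B nbhsB.
  have [r /= r0 Br] := (@nbhs_normP R V _ B).1 nbhsB.
  have e0 : 0 < r / (`|d| + 1) by rewrite divr_gt0 ?ltr_pwDr.
  have [t [t01 Ct] tt] := sup_adherent e0 supS.
  exists (a + t *: d); split => //; apply: Br => /=.
  rewrite opprD addrACA subrr add0r -scalerBl small_step // subr_ge0 le_tau //=.
  by rewrite lerBlDl -lerBlDr ltW.
have tau_lt1 : tau < 1.
  rewrite lt_neqAle tau1 andbT; apply: contraPneq Cad => tau_eq1.
  by rewrite -[d]scale1r -tau_eq1.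
exists tau; split => //; first by rewrite tau0.
- move=> /interiorP[r r0 Ctau_r].
  pose s := Num.min (1 - tau) (r / (`|d| + 1)).
  have s0 : 0 < s by rewrite lt_min subr_gt0 tau_lt1 divr_gt0 ?ltr_pwDr.
  suff : tau + s <= tau by rewrite gerDl leNgt s0.
  apply: le_tau; first by rewrite addr_ge0 ?(ltW s0) // -lerBrDl ge_min lexx.
  apply: Ctau_r; have -> : a + (tau + s) *: d - (a + tau *: d) = s *: d.
    by apply/rowP => i; rewrite !mxE; ring.
  by rewrite small_step // (ltW s0) ge_min lexx orbT.
- move=> t /andP[tau_t t1] Ct; suff : t <= tau by rewrite leNgt tau_t.
  by apply: le_tau Ct; rewrite t1 andbT (le_trans tau0) ?ltW.
Qed.

Lemma convex_line_between C x d (a b s : R) : convex_set_rV C ->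
  C (x + a *: d) -> C (x + b *: d) -> a <= s <= b -> C (x + s *: d).
Proof.
move=> convC Ca Cb /andP[a_s s_b]; have [a_eq_b | a_neq_b] := eqVneq a b.
  by have -> : s = b by apply/eqP; rewrite eq_le s_b -a_eq_b a_s.
have ba : 0 < b - a by rewrite subr_gt0 lt_neqAle a_neq_b (le_trans a_s s_b).
have -> : x + s *: d = ((s - a) / (b - a)) *: (x + b *: d) +
                       (1 - (s - a) / (b - a)) *: (x + a *: d).
  by apply/rowP => i; rewrite !mxE; field; rewrite gt_eqF.
apply: convC => //; rewrite divr_ge0 ?(ltW ba) ?subr_ge0 //=.
by rewrite ler_pdivrMr // mul1r lerD2r.
Qed.

Lemma isolated_locally_finite (S B : set V) :
  (forall y, exists2 rho : R, 0 < rho & forall p, S p -> `|p - y| < rho -> p = y) ->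
  bounded_set B -> finite_set (B `&` S).
Proof.
move=> isoS /bounded_norm_le[M M0 BM].
have iso y : exists r : R, 0 < r /\ forall p, S p -> `|p - y| < r -> p = y.
  by have [r r0 iso_r] := isoS y; exists r.
have [rho rho_iso] := choice iso.
pose K := closed_ball (0 : V) M.
have BK : B `<=` K.
  by move=> x Bx; rewrite /K closed_ballE // /closed_ball_ /= sub0r normrN BM.
have cK : compact K.
  apply: bounded_closed_compact; last exact: closed_ball_closed.
  exists M; split; first by rewrite realE (ltW M0).
  move=> M' MM' x; rewrite /K closed_ballE // /closed_ball_ /= sub0r normrN => xM.
  by rewrite (le_trans xM) ?ltW.
move: cK; rewrite compact_cover => /(_ V K (fun y => ball y (rho y))) [||D _ coverD].
- by move=> y _; exact: ball_open.
- by move=> y Ky; exists y => //; apply: ballxx; case: (rho_iso y).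
apply: sub_finite_set (finite_fset D) => p [Bp Sp].
have [y /= Dy] := coverD p (BK p Bp); rewrite -ball_normE /= => yp.
by have [_ isoy] := rho_iso y; rewrite (isoy p Sp) // distrC.
Qed.

End ConvexGeometry.

Section BregmanDivergence.
Variables (R : realType) (n : nat).
Local Notation V := 'rV[R]_n.
Implicit Types (C : set V) (h : V -> R).

Lemma bregmanE h y x : bregman h y x = h y - h x - 'd h x (y - x).
Proof.
congr (_ - _); rewrite /inner {2}(row_sum_delta (y - x)) linear_sum.
by apply: eq_bigr => i _; rewrite linearZ /= mxE mulrC.
Qed.

Lemma bregman_ge0 C h z x : convex_on C h -> C z -> interior C x ->
  differentiable h x -> 0 <= bregman h z x.
Proof.
move=> convh Cz intx dhx; rewrite bregmanE subr_ge0 -deriveE //.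
have Cx : C x by exact: interior_subset.
have /cvg_dnbhs_at_right dright := diff_derivable (v := z - x) dhx.
apply: (cvgr_to_le dright); near=> t.
have t0 : 0 < t by near: t; exact: nbhs_right_gt.
have t01 : 0 <= t <= 1 by rewrite (ltW t0); near: t; exact: nbhs_right_le.
have := convh z x t Cz Cx t01.
have -> : t *: z + (1 - t) *: x = t *: (z - x) + x.
  by apply/rowP => i; rewrite !mxE; ring.
rewrite /= /GRing.scale /= ler_pdivrMl //; lra.
Unshelve. all: by end_near. Qed.

Lemma diff_le_bregman C h m v x : convex_on C h -> C (m + v) -> interior C x ->
  differentiable h x -> 'd h x v <= bregman h m x + (h (m + v) - h m).
Proof.
move=> convh Cmv intx dhx; have := bregman_ge0 convh Cmv intx dhx; rewrite !bregmanE.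
have -> : 'd h x (m + v - x) = 'd h x (m - x) + 'd h x v by rewrite -linearD addrAC.
lra.
Qed.

Lemma bregman_convex_comb h y q x (t : R) :
  bregman h ((1 - t) *: y + t *: q) x =
  (1 - t) * bregman h y x + t * bregman h q x +
  (h ((1 - t) *: y + t *: q) - (1 - t) * h y - t * h q).
Proof.
rewrite !bregmanE.
have -> : (1 - t) *: y + t *: q - x = (1 - t) *: (y - x) + t *: (q - x).
  by apply/rowP => i; rewrite !mxE; ring.
rewrite linearD !linearZ /= /GRing.scale /=; ring.
Qed.

Lemma bregman_bounded_grad_bounded C h m (K : R) : convex_on C h -> interior C m ->
  exists M : R, forall x, interior C x -> differentiable h x ->
    bregman h m x <= K -> `|grad h x| <= M.
Proof.
move=> convh /interiorP[r r0 Cm].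
pose rho := r / 2; have rho0 : 0 < rho by rewrite divr_gt0.
pose e i : V := delta_mx 0 i.
have Cme a i : `|a| <= rho -> C (m + a *: e i).
  move=> a_le; apply: Cm; rewrite addrC addKr.
  apply: (@le_lt_trans _ _ rho); last by rewrite /rho; lra.
  apply: row_norm_le (ltW rho0) _ => j; rewrite !mxE.
  by case: (j == i); rewrite ?mulr1 ?mulr0 ?normr0 ?(ltW rho0).
pose b i := `|h (m + rho *: e i) - h m| + `|h (m + (- rho) *: e i) - h m|.
exists (rho^-1 * (`|K| + \sum_i b i)) => x intx dhx DK.
have b_ge0 i : 0 <= b i by rewrite addr_ge0.
apply: row_norm_le => [|i].
  by rewrite mulr_ge0 ?invr_ge0 ?(ltW rho0) ?addr_ge0 ?sumr_ge0.
have grad_le a : `|a| <= rho -> a * grad h x 0 i <= K + (h (m + a *: e i) - h m).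
  move=> a_le; have := diff_le_bregman convh (Cme a i a_le) intx dhx.
  rewrite linearZ /= mxE /GRing.scale /=; lra.
have rho_le : `|rho| <= rho by rewrite ger0_norm ?(ltW rho0).
have [gr gl] : rho * grad h x 0 i <= K + (h (m + rho *: e i) - h m) /\
    - rho * grad h x 0 i <= K + (h (m + - rho *: e i) - h m).
  by split; apply: grad_le; rewrite ?normrN.
set up := h (m + rho *: e i) - h m in gr; set down := h (m + - rho *: e i) - h m in gl.
have bi : `|up| + `|down| <= \sum_j b j by rewrite (bigD1 i) //= lerDl sumr_ge0.
have := (ler_norm K, ler_norm up, ler_norm down, normr_ge0 up, normr_ge0 down).
rewrite ler_pdivlMl // => -[[[[? ?] ?] ?] ?].
by case: (lerP 0 (grad h x 0 i)) => g0;
  [rewrite (ger0_norm g0) | rewrite (ltr0_norm g0)]; lra.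
Qed.

Lemma condB_bregman_small C h y (eps : R) : condB C h -> C y -> 0 < eps ->
  exists2 d : R, 0 < d &
    forall x, interior C x -> `|x - y| < d -> bregman h y x < eps.
Proof.
move=> hB Cy eps0; apply: contrapT => no_d.
have bad k : exists x, [/\ interior C x, `|x - y| < k.+1%:R^-1 & eps <= bregman h y x].
  apply: contrapT => no_x; apply: no_d; exists k.+1%:R^-1 => // x intx xy.
  by rewrite ltNge; apply/negP => Dx; apply: no_x; exists x.
have [x_ Hx_] := choice bad.
have x_y : x_ @ \oo --> y.
  apply/cvgrPdist_lt => e e0; near=> k; rewrite distrC.
  apply: lt_trans (_ : k.+1%:R^-1 < e); first by case: (Hx_ k).
  by near: k; exact: near_infty_natSinv_lt (PosNum e0).
have intx_ k : interior C (x_ k) by case: (Hx_ k).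
have /cvgrPdist_lt /(_ eps eps0) /filter_ex [k] := hB x_ y intx_ Cy x_y.
rewrite sub0r normrN; case: (Hx_ k) => _ _ Dk; rewrite ltNge.
by move/negP; apply; apply: le_trans (ler_norm _).
Unshelve. all: by end_near. Qed.

Lemma boundary_segment_not_interior C h y q (t K : R) :
  convex_set_rV C -> legendre C h -> condB C h -> C y -> C q -> ~ interior C q ->
  0 <= t <= 1 ->
  (exists2 d : R, 0 < d &
     forall x, interior C x -> `|x - q| < d -> bregman h y x <= K) ->
  ~ interior C ((1 - t) *: y + t *: q).
Proof.
move=> convC [convh [dh [_ [blowup _]]]] hB Cy Cq bdq /andP[t0 t1] [d d0 Dy] intm.
set m := _ + _ in intm.
pose K0 := h m - (1 - t) * h y - t * h q.
have [M gradM] := bregman_bounded_grad_bounded (K + 1 + K0) convh intm.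
have [e e0 bigM] := blowup q (conj (subset_closure Cq) bdq) M.
have [dq dq0 Dq] := condB_bregman_small hB Cq ltr01.
have min0 : 0 < Num.min e (Num.min d dq) by rewrite !lt_min e0 d0 dq0.
have [x intx xq] := convex_interior_near convC (ex_intro _ m intm) Cq min0.
move: xq; rewrite !lt_min => /and3P[xqe xqd xqdq].
have dhx := dh x intx.
have Dyx := Dy x intx xqd; have Dqx := Dq x intx xqdq.
have Dyx0 := bregman_ge0 convh Cy intx dhx; have Dqx0 := bregman_ge0 convh Cq intx dhx.
have : bregman h m x <= K + 1 + K0.
  rewrite /m bregman_convex_comb -/m -/K0.
  have : (1 - t) * bregman h y x <= K by nra.
  have : t * bregman h q x <= 1 by nra.
  lra.
by move=> /(gradM x intx dhx); rewrite leNgt bigM.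
Qed.

Lemma reflection_mem C h y : convex_set_rV C -> closed C -> interior C !=set0 ->
  legendre C h -> condB C h -> C y ->
  exists2 rho : R, 0 < rho & forall p, C p -> `|p - y| < rho -> C (p + (p - y)).
Proof.
move=> convC clC intC hL hB Cy.
have [d d0 Dy] := condB_bregman_small hB Cy ltr01.
have d20 : 0 < d / 2 by rewrite divr_gt0.
exists (d / 2) => // p Cp py; apply: contrapT => Cw.
have [c intc cy] := convex_interior_near convC intC Cy d20.
have Cc := interior_subset intc.
have Cw' : ~ C (c + (p + (p - y) - c)) by rewrite addrC subrK.
have [tau [/andP[tau0 tau1] Cq bdq _]] := segment_exit_point clC Cc Cw'.
set q := c + _ in Cq bdq.
have tau10 : 0 < 1 + tau by lra.
have qy : `|q - y| < d.
  have -> : q - y = (1 - tau) *: (c - y) + (2 * tau) *: (p - y).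
    by apply/rowP => i; rewrite !mxE; ring.
  apply: le_lt_trans (ler_normD _ _) _.
  rewrite !normrZ !ger0_norm ?mulr_ge0 ?subr_ge0 ?(ltW tau1) //; nra.
apply: (boundary_segment_not_interior (t := (1 + tau)^-1) (K := 1) convC hL hB Cy Cq bdq).
- by rewrite invr_ge0 ltW //= invf_le1 // lerDl.
- exists (d - `|q - y|) => [|x intx xq]; first by rewrite subr_gt0.
  apply/ltW/Dy => //; rewrite -(subrK q x) -addrA.
  apply: le_lt_trans (ler_normD _ _) _; lra.
- have -> : (1 - (1 + tau)^-1) *: y + (1 + tau)^-1 *: q =
      ((1 - tau) / (1 + tau)) *: c + (1 - (1 - tau) / (1 + tau)) *: p.
    by apply/rowP => i; rewrite /q !mxE; field; rewrite gt_eqF.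
  apply: interior_convex_comb => //; rewrite divr_gt0 ?subr_gt0 //=.
  by rewrite ler_pdivrMr // mul1r lerD2l -subr_ge0 opprK addr_ge0.
Qed.

Lemma extreme_point_isolated C h y : convex_set_rV C -> closed C ->
  interior C !=set0 -> legendre C h -> condB C h ->
  exists2 rho : R, 0 < rho & forall p, extreme_point C p -> `|p - y| < rho -> p = y.
Proof.
move=> convC clC intC hL hB; have [Cy | notCy] := pselect (C y).
  have [rho rho0 refl] := reflection_mem convC clC intC hL hB Cy.
  exists rho => // p [Cp extp] py.
  have half01 : 0 < (2 : R)^-1 < 1 by apply/andP; split; lra.
  have p_mid : p = 2^-1 *: y + (1 - 2^-1) *: (p + (p - y)).
    by apply/rowP => i; rewrite !mxE; field.
  by have [] := extp _ _ _ Cy (refl p Cp py) half01 p_mid.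
have /(@nbhs_normP R V)[r r0 notC] : nbhs y (~` C).
  by apply: open_nbhs_nbhs; split => //; exact: closed_openC.
by exists r => // p [Cp _] py; exfalso; apply: (notC p) => //=; rewrite distrC.
Qed.

End BregmanDivergence.

Section Minkowski.
Variables (R : realType) (n : nat).
Local Notation V := 'rV[R]_n.
Implicit Types C : set V.

(* The two-sided directions at [x] span the direction space of the smallest face
   of [C] containing [x]. *)
Definition two_sided_dir C x d :=
  exists2 e : R, 0 < e & C (x + e *: d) /\ C (x - e *: d).

Lemma two_sided_dir0 C x : C x -> two_sided_dir C x 0.
Proof. by move=> Cx; exists 1 => //; rewrite scaler0 addr0 subr0. Qed.

Lemma two_sided_dirZ C x d (k : R) :
  C x -> two_sided_dir C x d -> two_sided_dir C x (k *: d).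
Proof.
move=> Cx [e e0 [Cp Cm]]; have [k0 | k0 | ->] := ltgtP k 0.
- exists (e / - k); first by rewrite divr_gt0 ?oppr_gt0.
  rewrite !scalerA.
  have -> : e / - k * k = - e by field; rewrite lt_eqF.
  by rewrite scaleNr opprK; split.
- exists (e / k); first by rewrite divr_gt0.
  by rewrite !scalerA mulfVK ?gt_eqF.
- by rewrite scale0r; exact: two_sided_dir0.
Qed.

Lemma two_sided_dirD C x d1 d2 : convex_set_rV C -> C x ->
  two_sided_dir C x d1 -> two_sided_dir C x d2 -> two_sided_dir C x (d1 + d2).
Proof.
move=> convC Cx [e1 e10 [Cp1 Cm1]] [e2 e20 [Cp2 Cm2]].
pose e := Num.min e1 e2 / 2.
have e0 : 0 < e by rewrite divr_gt0 // lt_min e10 e20.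
have Cx0 d : C (x + 0 *: d) by rewrite scale0r addr0.
have two_e d e' : 0 < e' -> C (x + e' *: d) -> C (x - e' *: d) -> 2 * e <= e' ->
    C (x + (2 * e) *: d) /\ C (x + (- (2 * e)) *: d).
  move=> e'0 Cp Cm ee'; split.
    by apply: convex_line_between convC (Cx0 d) Cp _; rewrite ee' andbT mulr_ge0 ?(ltW e0).
  rewrite -scaleNr in Cm.
  apply: convex_line_between convC Cm (Cx0 d) _.
  by rewrite lerN2 ee' oppr_le0 mulr_ge0 ?(ltW e0).
have e_le e' : Num.min e1 e2 <= e' -> 2 * e <= e'.
  by rewrite /e mulrC divfK ?pnatr_eq0.
have [P1 N1] : C (x + (2 * e) *: d1) /\ C (x + (- (2 * e)) *: d1).
  by apply: (two_e d1 e1 e10 Cp1 Cm1); apply: e_le; rewrite ge_min lexx.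
have [P2 N2] : C (x + (2 * e) *: d2) /\ C (x + (- (2 * e)) *: d2).
  by apply: (two_e d2 e2 e20 Cp2 Cm2); apply: e_le; rewrite ge_min lexx orbT.
have half : 0 <= (2 : R)^-1 <= 1 by apply/andP; split; lra.
exists e => //; split.
  have -> : x + e *: (d1 + d2) =
      2^-1 *: (x + (2 * e) *: d1) + (1 - 2^-1) *: (x + (2 * e) *: d2).
    by apply/rowP => i; rewrite !mxE; field.
  exact: convC.
have -> : x - e *: (d1 + d2) =
    2^-1 *: (x + (- (2 * e)) *: d1) + (1 - 2^-1) *: (x + (- (2 * e)) *: d2).
  by apply/rowP => i; rewrite !mxE; field.
exact: convC.
Qed.

Lemma two_sided_dir_span C x (X : seq V) v : convex_set_rV C -> C x ->
  (forall u, u \in X -> two_sided_dir C x u) -> v \in <<X>>%VS -> two_sided_dir C x v.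
Proof.
move=> convC Cx dirX /(@coord_span _ _ _ (in_tuple X)) ->.
apply: (big_ind (two_sided_dir C x)) => [|d1 d2|i _]; first exact: two_sided_dir0.
  exact: two_sided_dirD.
by apply: two_sided_dirZ => //; apply: dirX; rewrite mem_nth.
Qed.

Lemma two_sided_dir_convex_comb C x1 z e (t : R) : convex_set_rV C -> C z ->
  0 < t <= 1 -> two_sided_dir C x1 e -> two_sided_dir C (t *: x1 + (1 - t) *: z) e.
Proof.
move=> convC Cz /andP[t0 t1] [e1 e10 [Cp Cm]].
have t01 : 0 <= t <= 1 by rewrite (ltW t0) t1.
exists (t * e1); first by rewrite mulr_gt0.
split.
  have -> : t *: x1 + (1 - t) *: z + (t * e1) *: e = t *: (x1 + e1 *: e) + (1 - t) *: z.
    by apply/rowP => i; rewrite !mxE; ring.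
  exact: convC.
have -> : t *: x1 + (1 - t) *: z - (t * e1) *: e = t *: (x1 - e1 *: e) + (1 - t) *: z.
  by apply/rowP => i; rewrite !mxE; ring.
exact: convC.
Qed.

Lemma two_sided_dir_exit C x d : convex_set_rV C -> closed C -> bounded_set C ->
  C x -> two_sided_dir C x d -> d != 0 ->
  exists2 T : R, 0 < T & C (x + T *: d) /\ ~ two_sided_dir C (x + T *: d) d.
Proof.
move=> convC clC /bounded_norm_le[M M0 CM] Cx [e e0 [Ce _]] d_neq0.
have d0 : 0 < `|d| by rewrite normr_gt0.
pose T0 := (M + `|x| + 1) / `|d|.
have T00 : 0 < T0 by rewrite divr_gt0 // ltr_pwDr // addr_ge0 ?(ltW M0).
have notC : ~ C (x + T0 *: d).
  move=> /CM Cfar; have := ler_normB (x + T0 *: d) x.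
  rewrite addrC addKr normrZ ger0_norm ?(ltW T00) // /T0 divfK ?gt_eqF //; lra.
have [tau [/andP[tau0 tau1] Ctau _ after]] := segment_exit_point clC Cx notC.
have C_on t : 0 <= t -> t * T0 <= e -> C (x + t *: (T0 *: d)).
  have Cx0 : C (x + 0 *: d) by rewrite scale0r addr0.
  move=> t0 te; rewrite scalerA; apply: convex_line_between convC Cx0 Ce _.
  by rewrite te andbT mulr_ge0 ?(ltW T00).
have tau_gt0 : 0 < tau.
  rewrite lt_neqAle tau0 andbT; apply/negP => /eqP tau_eq0.
  pose t := Num.min 1 (e / T0).
  have t0 : 0 < t by rewrite lt_min ltr01 divr_gt0.
  apply: (after t); first by rewrite -tau_eq0 t0 ge_min lexx.
  by apply: C_on; rewrite ?(ltW t0) // -ler_pdivlMr // ge_min lexx orbT.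
exists (tau * T0); first by rewrite mulr_gt0.
rewrite -scalerA; split => // -[e' e'0 [Ce' _]].
pose t := Num.min 1 (tau + e' / T0).
have tau_t : tau < t by rewrite lt_min tau1 ltrDl divr_gt0.
apply: (after t); first by rewrite tau_t ge_min lexx.
have Ca : C (x + (tau * T0) *: d) by rewrite -scalerA.
have Cb : C (x + (tau * T0 + e') *: d) by rewrite scalerDl addrA -scalerA.
rewrite scalerA; apply: convex_line_between convC Ca Cb _.
rewrite ler_wpM2r ?(ltW T00) ?(ltW tau_t) //=.
have : t <= tau + e' / T0 by rewrite ge_min lexx orbT.
by rewrite -(ler_pM2r T00) mulrDl divfK ?gt_eqF.
Qed.

Lemma not_extreme_two_sided_dir C x : convex_set_rV C -> C x -> ~ extreme_point C x ->
  exists2 d, d != 0 & two_sided_dir C x d.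
Proof.
move=> convC Cx not_ext; apply: contrapT => no_dir; apply: not_ext; split => // y z t Cy Cz.
move=> /andP[t0 t1] x_yz.
have Cx0 v : C (x + 0 *: v) by rewrite scale0r addr0.
have C1 w : C w -> C (x + 1 *: (w - x)) by rewrite scale1r addrC subrK.
have y_eq_x : y = x.
  apply: contrapT => /eqP y_neq_x; apply: no_dir; exists (y - x); first by rewrite subr_eq0.
  exists (t * (1 - t)); first by rewrite mulr_gt0 // subr_gt0.
  split.
    by apply: (convex_line_between convC (Cx0 _) (C1 _ Cy)); apply/andP; split; nra.
  have -> : x - (t * (1 - t)) *: (y - x) = x + ((1 - t) ^+ 2) *: (z - x).
    by rewrite x_yz; apply/rowP => i; rewrite !mxE; ring.
  by apply: (convex_line_between convC (Cx0 _) (C1 _ Cz)); apply/andP; split; nra.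
split => //; rewrite y_eq_x in x_yz; apply/rowP => i.
have := congr1 (fun v : V => v 0 i) x_yz; rewrite !mxE => x_yz_i.
by apply: (@mulfI _ (1 - t)); [rewrite subr_eq0 gt_eqF | lra].
Qed.

Lemma free_size_le (X : seq V) : free X -> (size X <= n)%N.
Proof.
move=> /eqP <-; have := dimvS (subvf <<X>>%VS).
by rewrite dimvf dim_matrix mul1r.
Qed.

Lemma two_sided_dir_split C x d : convex_set_rV C -> closed C -> bounded_set C ->
  C x -> two_sided_dir C x d -> d != 0 ->
  exists x1 x2 (t : R), [/\ 0 < t < 1, x = t *: x1 + (1 - t) *: x2 &
    forall y, y = x1 \/ y = x2 -> [/\ C y, ~ two_sided_dir C y d &
      forall e, two_sided_dir C y e -> two_sided_dir C x e]].
Proof.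
move=> convC clC bC Cx dir_d d_neq0.
have [T1 T10 [C1 not_dir1]] := two_sided_dir_exit convC clC bC Cx dir_d d_neq0.
have dir_md : two_sided_dir C x (- d) by rewrite -scaleN1r; exact: two_sided_dirZ.
have md_neq0 : - d != 0 by rewrite oppr_eq0.
have [T2 T20 [C2 not_dir2]] := two_sided_dir_exit convC clC bC Cx dir_md md_neq0.
have T0 : 0 < T1 + T2 by rewrite addr_gt0.
pose t := T2 / (T1 + T2).
have t0 : 0 < t by rewrite divr_gt0.
have t1 : t < 1 by rewrite ltr_pdivrMr // mul1r ltrDr.
exists (x + T1 *: d), (x + T2 *: - d), t.
have x_eq : x = t *: (x + T1 *: d) + (1 - t) *: (x + T2 *: - d).
  by apply/rowP => i; rewrite !mxE /t; field; rewrite gt_eqF.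
split => [|//|y [->|->]]; first by rewrite t0.
  split=> // e dir1; rewrite x_eq.
  by apply: two_sided_dir_convex_comb; rewrite ?t0 ?ltW.
split=> [//||e dir2].
  by move=> dir2; apply: not_dir2; have := two_sided_dirZ (-1) C2 dir2; rewrite scaleN1r.
have -> : x = (1 - t) *: (x + T2 *: - d) + (1 - (1 - t)) *: (x + T1 *: d).
  by rewrite {1}x_eq; apply/rowP => i; rewrite !mxE; ring.
apply: two_sided_dir_convex_comb => //.
by rewrite subr_gt0 t1 lerBlDr lerDl ltW.
Qed.

Lemma convex_sub_of_extreme C (D : set V) : convex_set_rV C -> closed C ->
  bounded_set C -> convex_set_rV D -> extreme_point C `<=` D -> C `<=` D.
Proof.
move=> convC clC bC convD extD.
(* Induction on the dimension of the face of x: cutting x along a two-sided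
   direction d gives two points of C whose faces are smaller, as they omit d. *)
suff dimP k x : C x -> (forall X, free X -> (forall v, v \in X -> two_sided_dir C x v) ->
    (size X <= k)%N) -> D x.
  by move=> x Cx; apply: (dimP n x Cx) => X + _; exact: free_size_le.
elim: k x => [|k IHk] x Cx dimx; have [/extD // | not_ext] := pselect (extreme_point C x);
  have [d d_neq0 dir_d] := not_extreme_two_sided_dir convC Cx not_ext.
  suff : (size [:: d] <= 0)%N by [].
  by apply: dimx => [|v]; [rewrite seq1_free | rewrite inE => /eqP ->].
have lower_dim y : [/\ C y, ~ two_sided_dir C y d &
    forall e, two_sided_dir C y e -> two_sided_dir C x e] -> D y.
  move=> [Cy not_dir_yd dir_yx]; apply: IHk => // X freeX dirX.
  suff : (size (d :: X) <= k.+1)%N by [].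
  apply: dimx => [|v]; last by rewrite inE => /predU1P[-> // | /dirX /dir_yx].
  rewrite free_cons freeX andbT; apply/negP => /(two_sided_dir_span convC Cy dirX).
  exact: not_dir_yd.
have [x1 [x2 [t [/andP[t0 t1] x_eq faces]]]] :=
  two_sided_dir_split convC clC bC Cx dir_d d_neq0.
rewrite x_eq; apply: convD; last by rewrite !ltW.
- by apply/lower_dim/faces; left.
- by apply/lower_dim/faces; right.
Qed.

Lemma polytope_of_finite_extreme C : convex_set_rV C -> closed C -> bounded_set C ->
  finite_set (extreme_point C) -> polytope C.
Proof.
move=> convC clC bC /finite_fsetP[X extX].
pose s := finmap.enum_fset X.
have ext_s x : extreme_point C x <-> x \in s by rewrite extX.
exists (size s), (fun i => nth 0 s i); apply/seteqP; split.
- apply: convex_sub_of_extreme => // [x y t hx hy t01 D hullD | x /ext_s xs D [_ pD]].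
    by case: (hullD) => convD _; apply: convD => //; [exact: hx | exact: hy].
  have xs_idx : (index x s < size s)%N by rewrite index_mem.
  by rewrite -(nth_index 0 xs); exact: (pD (Ordinal xs_idx)).
- move=> x; apply; split => // i.
  by have [] := (ext_s (nth 0 s i)).2 (mem_nth 0 (ltn_ord i)).
Qed.

End Minkowski.

Theorem proposition1 (R : realType) (n : nat) (C : set 'rV[R]_n) (h : 'rV[R]_n -> R) :
  convex_set_rV C -> closed C -> interior C !=set0 ->
  legendre C h -> {within C, continuous h} -> condB C h ->
  (forall B : set 'rV[R]_n, bounded_set B -> finite_set (B `&` extreme_point C)) /\
  (bounded_set C -> polytope C).
Proof.
move=> convC clC intC hL _ hB.
have ext_loc_fin B : bounded_set B -> finite_set (B `&` extreme_point C).
  apply: isolated_locally_finite => y.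
  exact: extreme_point_isolated convC clC intC hL hB.
split=> // bC; apply: polytope_of_finite_extreme => //.
by have := ext_loc_fin C bC; rewrite setIidr // => x [].
Qed.
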